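(* Let $F:\{0,1\}^n\to\mathbb{F}^E_m\cap[0,1]$ be a finite-precision CDF over a binary number format $\mathcal{B}=(n,\gamma_{\mathcal{B}},\phi_{\mathcal{B}})$. Then the procedure $\textsc{Opt}(F)$ described in the context halts almost surely, returns a string $X\in\{0,1\}^n$ with $\Pr(X\le_{\mathcal{B}}x)=F(x)$ for every $x\in\{0,1\}^n$, and is entropy-optimal: its expected number of fair random bits drawn equals the minimum expected entropy cost over all random variate generators with the same output distribution.
   Context: $\overline{\mathbb{R}}=\mathbb{R}\cup\{-\infty,+\infty,\bot\}$ is totally ordered by $-\infty<$ reals $<+\infty<\bot$. A binary number format $\mathcal{B}=(n,\gamma_{\mathcal{B}},\phi_{\mathcal{B}})$ consists of $n\ge1$, $\gamma_{\mathcal{B}}:\{0,1\}^n\to\overline{\mathbb{R}}$, and a bijection $\phi_{\mathcal{B}}$ of $\{0,1\}^n$ with $b<_{\mathrm{dict}}b'\Rightarrow\gamma_{\mathcal{B}}(\phi_{\mathcal{B}}(b))\le\gamma_{\mathcal{B}}(\phi_{\mathcal{B}}(b'))$; it induces the order $b<_{\mathcal{B}}b'$ iff $\phi_{\mathcal{B}}^{-1}(b)<_{\mathrm{dict}}\phi_{\mathcal{B}}^{-1}(b')$. $\mathbb{F}^E_m\cap[0,1]$ is the set of reals in $[0,1]$ representable as floating-point numbers with $E$ exponent and $m$ mantissa bits. A finite-precision CDF over $\mathcal{B}$ is $F:\{0,1\}^n\to\mathbb{F}^E_m\cap[0,1]$ with $F(\phi_{\mathcal{B}}(1^n))=1$ and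 $b<_{\mathcal{B}}b'\Rightarrow F(b)\le F(b')$. For $z\in[0,1]$ with concise binary expansion $(z_0.z_1z_2\ldots)_2$ (not ending in infinitely many 1s) write $[z]_j=z_j$. $\textsc{Opt}(F,b,\ell,f_0,f_1)$, called initially as $\textsc{Opt}(F,\varepsilon,0,0,1)$: if $|b|=n$ return $\phi_{\mathcal{B}}(b)$. Let $f_2=F(\phi_{\mathcal{B}}(b\,0\,1^{n-|b|-1}))$. If $f_2=f_1$ return $\textsc{Opt}(F,b0,\ell,f_0,f_2)$; if $f_2=f_0$ return $\textsc{Opt}(F,b1,\ell,f_2,f_1)$. Let $a_0(j)=[f_2-f_0]_j$ and $a_1(j)=[f_1-f_2]_j$ (exact real differences). If $\ell>0$: if $a_0(\ell)=1$ and $a_1(\ell)=0$ return $\textsc{Opt}(F,b0,\ell,f_0,f_2)$; if $a_0(\ell)=0$ and $a_1(\ell)=1$ return $\textsc{Opt}(F,b1,\ell,f_2,f_1)$. Then repeat: draw a fair random bit $x$, set $\ell\leftarrow\ell+1$; if $x=0$ and $a_0(\ell)=1$ return $\textsc{Opt}(F,b0,\ell,f_0,f_2)$; if $x=1$ and $a_1(\ell)=1$ return $\textsc{Opt}(F,b1,\ell,f_2,f_1)$. A random variate generator for a distribution $q$ on $\{0,1\}^n$ is a partial map $Y:\{0,1\}^*\rightharpoonup\{0,1\}^n$ with prefix-free domain, $\sum_{u\in\mathrm{dom}(Y)}2^{-|u|}=1$ and $\sum_{u}2^{-|u|}\mathbf{1}[Y(u)=s]=q(s)$; its expected entropy cost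 is $\sum_{u\in\mathrm{dom}(Y)}|u|2^{-|u|}$. *)

From HB Require Import structures.
From mathcomp Require Import all_boot all_order all_algebra all_fingroup.
From mathcomp Require Import all_classical all_reals all_analysis.
Set Implicit Arguments. Unset Strict Implicit. Unset Printing Implicit Defensive.
Import Order.TTheory GRing.Theory Num.Theory.
Local Open Scope ring_scope.

Inductive xreal (R : Type) := XNegInf | XReal of R | XPosInf | XBot.
Arguments XNegInf {R}. Arguments XPosInf {R}. Arguments XBot {R}.

Definition xrank (R : Type) (x : xreal R) : nat :=
  match x with XNegInf => 0 | XReal _ => 1 | XPosInf => 2 | XBot => 3 end%N.

Definition xle (R : realType) (x y : xreal R) : bool :=
  match x, y with
  | XReal a, XReal b => a <= b
  | _, _ => (xrank x <= xrank y)%N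
  end.

Fixpoint dict_lt (s t : seq bool) : bool :=
  match s, t with
  | x :: s', y :: t' => (~~ x && y) || ((x == y) && dict_lt s' t')
  | _, _ => false
  end.

Definition is_number_format (R : realType) (n : nat)
    (gamma : n.-tuple bool -> xreal R) (phi : {perm n.-tuple bool}) : Prop :=
  (1 <= n)%N /\
  forall b b' : n.-tuple bool, dict_lt b b' -> xle (gamma (phi b)) (gamma (phi b')).

Definition fmt_lt (n : nat) (phi : {perm n.-tuple bool}) (b b' : n.-tuple bool) : bool :=
  dict_lt ((phi^-1)%g b) ((phi^-1)%g b').
Definition fmt_le (n : nat) (phi : {perm n.-tuple bool}) (b b' : n.-tuple bool) : bool :=
  (b == b') || fmt_lt phi b b'.

(* ---------- floating point numbers with E exponent bits and m mantissa bits
   (IEEE-754 style: bias 2^(E-1)-1, normal exponent fields 1..2^E-2,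
   subnormals with exponent 1-bias; signed). *)
Definition fp_bias (E : nat) : int := (2 ^ E.-1)%:Z - 1.
Definition fp_emin (E : nat) : int := 1 - fp_bias E.
Definition fp_emax (E : nat) : int := (2 ^ E)%:Z - 2 - fp_bias E.

Definition float_repr (R : realType) (E m : nat) (x : R) : Prop :=
  exists (sgn : bool) (f : nat), (f < 2 ^ m)%N /\
   (
     x = (-1) ^+ sgn * (f%:R / 2 ^+ m) * (2 : R) ^ fp_emin E
   \/
     exists e : int, fp_emin E <= e /\ e <= fp_emax E /\
       x = (-1) ^+ sgn * (1 + f%:R / 2 ^+ m) * (2 : R) ^ e ).

Definition is_fp_cdf (R : realType) (E m n : nat) (phi : {perm n.-tuple bool})
    (F : n.-tuple bool -> R) : Prop :=
  (forall b, float_repr E m (F b) /\ 0 <= F b <= 1) /\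
  F (phi [tuple of nseq n true]) = 1 /\
  (forall b b', fmt_lt phi b b' -> F b <= F b').

Definition bdigit (R : realType) (z : R) (j : nat) : bool :=
  ~~ (2%:Z %| Num.floor (z * 2 ^+ j))%Z.

(* Returns Some (x, rest) if it halts with output x having read the bits
   not in rest; None if it needs more bits than supplied.
   k = n - |b| is the remaining depth. *)
Section Opt.
Variables (R : realType) (n : nat) (phi : {perm n.-tuple bool})
          (F : n.-tuple bool -> R).

Definition to_tuple (s : seq bool) : n.-tuple bool :=
  insubd [tuple of nseq n false] s.

Fixpoint opt_desc (k : nat) (b : seq bool) (l : nat) (f0 f1 : R)
    (bits : seq bool) {struct k} : option (n.-tuple bool * seq bool) :=
  match k with
  | 0%N => Some (phi (to_tuple b), bits)
  | k'.+1 =>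
    let f2 := F (phi (to_tuple (b ++ false :: nseq (n - size b - 1) true))) in
    if f2 == f1 then opt_desc k' (rcons b false) l f0 f2 bits else
    if f2 == f0 then opt_desc k' (rcons b true) l f2 f1 bits else
    let a0 := bdigit (f2 - f0) in
    let a1 := bdigit (f1 - f2) in
    if (0 < l)%N && a0 l && ~~ a1 l then opt_desc k' (rcons b false) l f0 f2 bits else
    if (0 < l)%N && ~~ a0 l && a1 l then opt_desc k' (rcons b true) l f2 f1 bits else
    (fix loop (l : nat) (bs : seq bool) {struct bs} :=
       match bs with
       | [::] => None
       | x :: bs' =>
         let l' := l.+1 in
         if ~~ x && a0 l' then opt_desc k' (rcons b false) l' f0 f2 bs' else
         if x && a1 l' then opt_desc k' (rcons b true) l' f2 f1 bs' else
         loop l' bs'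
       end) l bits
  end.

Definition opt_exec (bits : seq bool) : option (n.-tuple bool * seq bool) :=
  opt_desc n [::] 0 0 1 bits.

Definition opt_gen (u : seq bool) : option (n.-tuple bool) :=
  match opt_exec u with
  | Some (x, [::]) => Some x
  | _ => None
  end.
End Opt.

Section Gen.
Variables (R : realType) (n : nat).
Local Open Scope ereal_scope.

Definition level_mass (P : seq bool -> bool) (k : nat) : R :=
  (\sum_(u : k.-tuple bool | P u) (2 ^- k))%R.

Definition str_mass (P : seq bool -> bool) : \bar R :=
  \sum_(k <oo) (level_mass P k)%:E.

Definition gen_prob (Y : seq bool -> option (n.-tuple bool)) (s : n.-tuple bool)
  : \bar R := str_mass (fun u => Y u == Some s).

Definition gen_cost (Y : seq bool -> option (n.-tuple bool)) : \bar R :=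
  \sum_(k <oo) (k%:R * level_mass (fun u => Y u != None) k)%:E.

Definition prefix_free (Y : seq bool -> option (n.-tuple bool)) : Prop :=
  forall u v, Y u != None -> Y v != None -> prefix u v -> u = v.

Definition is_generator (Y : seq bool -> option (n.-tuple bool))
    (q : n.-tuple bool -> \bar R) : Prop :=
  prefix_free Y /\
  str_mass (fun u => Y u != None) = 1 /\
  forall s, gen_prob Y s = q s.
End Gen.

(* Opt descends the binary tree of codes phi^-1 x.  At node b the subtree carries
   the mass f1 - f0 of the CDF, which the pivot f2 splits into f2 - f0 and
   f1 - f2.  The counter l and the inner loop add these two numbers in binary,
   digit by digit, the carry being the probability of still running the loop; so
   Opt sits at node b with counter l with probability bit_l(f1 - f0) 2^-l, and
   halts at x after exactly J bits with probability bit_J(p_x) 2^-J, where p_x is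
   the mass of x.  Floats are dyadic, so these expansions are finite: Opt halts
   and its leaf masses telescope to F.  This is the Knuth-Yao generator of p_x:
   for any other generator, the probability S_k of halting at x within k bits is
   a multiple of 2^-k below p_x, hence below the truncation of p_x to k digits,
   and Abel summation turns these bounds into the optimality of the expected
   cost. *)

From HB Require Import structures.
From mathcomp Require Import all_boot all_order all_algebra all_fingroup.
From mathcomp Require Import all_classical all_reals all_analysis.
From mathcomp Require Import zify ring lra.
Import Order.TTheory GRing.Theory Num.Theory.
Set Implicit Arguments. Unset Strict Implicit. Unset Printing Implicit Defensive.
Local Open Scope ring_scope.

Section BinaryExpansion.
Variable R : realType.
Implicit Types (u v z : R) (m N : nat).

Definition binfloor z m : int := Num.floor (z * 2 ^+ m).

Definition bitr z m : R := (bdigit z m)%:R.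

Lemma floor_mul2 (y : R) :
  Num.floor (y * 2) = 2 * Num.floor y + (~~ (2 %| Num.floor (y * 2)))%Z.
Proof.
have /andP[y_ge y_lt] := floor_itv y.
have lb : 2 * Num.floor y <= Num.floor (y * 2) by rewrite floor_ge_int rmorphM /=; nra.
have ub : Num.floor (y * 2) < 2 * Num.floor y + 2.
  by rewrite floor_lt_int rmorphD rmorphM /=; rewrite rmorphD /= in y_lt; nra.
by move: lb ub; case: (boolP (2 %| _)%Z) => /=; lia.
Qed.

Lemma binfloorS z m : binfloor z m.+1 = 2 * binfloor z m + bdigit z m.+1.
Proof. by rewrite /binfloor /bdigit exprSr mulrA {1}floor_mul2. Qed.

Lemma floorD_bounds (a b : R) :
  Num.floor a + Num.floor b <= Num.floor (a + b) <= Num.floor a + Num.floor b + 1.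
Proof.
have /andP[a1 a2] := floor_itv a; have /andP[b1 b2] := floor_itv b.
apply/andP; split; first by rewrite floor_ge_int rmorphD /=; lra.
by rewrite -ltzD1 floor_lt_int !rmorphD /=; rewrite !rmorphD /= in a2 b2; lra.
Qed.

Lemma binfloorD_carry u v m : 0 <= binfloor (u + v) m - binfloor u m - binfloor v m <= 1.
Proof.
have := floorD_bounds (u * 2 ^+ m) (v * 2 ^+ m); rewrite /binfloor mulrDl.
by move: (Num.floor _) (Num.floor _) (Num.floor _) => a b c /andP[? ?]; apply/andP; lia.
Qed.

Lemma binfloor_unit z : 0 <= z <= 1 -> binfloor z 0 = (z == 1).
Proof.
move=> /andP[z_ge0 z_le1]; rewrite /binfloor expr0 mulr1.
have [->|z_neq1] := eqVneq z 1; first by rewrite floor1.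
by apply: floor_def; rewrite add0r z_ge0 lt_neqAle z_neq1.
Qed.

Lemma bdigit_unit z : 0 <= z <= 1 -> bdigit z 0 = (z == 1).
Proof. by move=> z01; rewrite /bdigit -/(binfloor z 0) binfloor_unit //; case: (z == 1). Qed.

Lemma sum_bitr z M : 0 <= z <= 1 ->
  \sum_(j < M.+1) bitr z j * 2 ^- j = (binfloor z M)%:~R / 2 ^+ M.
Proof.
move=> z01; elim: M => [|M IH].
  by rewrite big_ord1 expr0 invr1 !mulr1 binfloor_unit // /bitr bdigit_unit //; case: (z == 1).
rewrite big_ord_recr /= IH binfloorS rmorphD rmorphM /= exprS invfM.
have -> : (bdigit z M.+1)%:~R = bitr z M.+1 :> R by rewrite /bitr; case: (bdigit _ _).
by field; rewrite expf_neq0.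
Qed.

Definition dyadic N z := exists i : int, z * 2 ^+ N = i%:~R.

Lemma dyadic0 N : dyadic N 0.
Proof. by exists 0; rewrite mul0r. Qed.

Lemma dyadic1 N : dyadic N 1.
Proof. by exists (2 ^+ N); rewrite mul1r rmorphXn. Qed.

Lemma dyadicB N u v : dyadic N u -> dyadic N v -> dyadic N (u - v).
Proof. by move=> [i ui] [j vj]; exists (i - j); rewrite mulrBl ui vj rmorphB. Qed.

Lemma binfloor_dyadic N z m : dyadic N z -> (N <= m)%N -> (binfloor z m)%:~R = z * 2 ^+ m.
Proof.
move=> [i zi] Nm; rewrite /binfloor -(subnKC Nm) exprD mulrA zi.
have -> : i%:~R * 2 ^+ (m - N) = (i * 2 ^+ (m - N))%:~R :> R by rewrite rmorphM rmorphXn.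
by rewrite intrKfloor.
Qed.

Lemma bdigit_dyadic N z m : dyadic N z -> (N < m)%N -> bdigit z m = false.
Proof.
move=> [i zi] Nm; have -> : m = (N + (m - N.+1).+1)%N by lia.
rewrite /bdigit exprD mulrA zi exprS.
have -> : i%:~R * (2 * 2 ^+ (m - N.+1)) = (2 * (i * 2 ^+ (m - N.+1)))%:~R :> R.
  by rewrite !rmorphM rmorphXn /= mulrCA.
by rewrite intrKfloor dvdz_mulr.
Qed.

Lemma bitr0 m : bitr 0 m = 0.
Proof. by rewrite /bitr /bdigit mul0r floor0. Qed.

Lemma bitr_dyadic N z m : dyadic N z -> (N < m)%N -> bitr z m = 0.
Proof. by move=> dz Nm; rewrite /bitr (bdigit_dyadic dz Nm). Qed.

End BinaryExpansion.

Lemma exprz_shift (R : realType) (e0 e : int) : e0 <= e ->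
  exists j : nat, (2 : R) ^ e * 2 ^+ absz e0 = 2 ^+ j.
Proof.
move=> e0e; exists (absz (e + absz e0)).
rewrite !exprnP -expfzDr //; congr (_ ^ _).
by case: (lerP 0 e0) => ?; lia.
Qed.

Lemma float_repr_dyadic (R : realType) E m (x : R) :
  float_repr E m x -> dyadic (m + absz (fp_emin E)) x.
Proof.
have intr_sign (s : bool) (f j : nat) :
    ((-1) ^+ s * f%:Z * 2 ^+ j)%:~R = (-1) ^+ s * f%:R * 2 ^+ j :> R.
  by rewrite !rmorphM !rmorphXn /= rmorphN1.
move=> [s [f [_ [->|[e [emin_e [_ ->]]]]]]].
- have [j ej] := exprz_shift R (lexx (fp_emin E)).
  exists ((-1) ^+ s * f%:Z * 2 ^+ j); rewrite intr_sign -ej exprD.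
  by field; rewrite expf_neq0.
- have [j ej] := exprz_shift R emin_e.
  exists ((-1) ^+ s * (2 ^ m + f)%N%:Z * 2 ^+ j); rewrite intr_sign -ej exprD natrD natrX.
  by field; rewrite expf_neq0.
Qed.

Section LevelMass.
Variable R : realType.
Implicit Types (P Q : seq bool -> bool) (k : nat).

Lemma eq_level_mass P Q k : {in [pred u | size u == k], P =1 Q} ->
  level_mass R P k = level_mass R Q k.
Proof. by move=> PQ; apply: eq_bigl => u; rewrite PQ // inE size_tuple. Qed.

Lemma level_mass_pred0 k : level_mass R xpred0 k = 0.
Proof. exact: big_pred0. Qed.

Lemma level_mass_ge0 P k : 0 <= level_mass R P k.
Proof. by apply: sumr_ge0 => u _; rewrite invr_ge0 exprn_ge0. Qed.

Lemma level_mass_card P k : level_mass R P k = #|[pred u : k.-tuple bool | P u]|%:R / 2 ^+ k.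
Proof. by rewrite /level_mass sumr_const mulr_natl. Qed.

Lemma level_mass0 P : level_mass R P 0 = (P [::])%:R.
Proof.
rewrite /level_mass big_mkcond /= (eq_bigr (fun _ => (P [::])%:R)).
  by rewrite sumr_const card_tuple.
by move=> u _; rewrite tuple0 expr0 invr1; case: (P _).
Qed.

Lemma level_massS P k : level_mass R P k.+1 =
  (level_mass R (fun u => P (false :: u)) k + level_mass R (fun u => P (true :: u)) k) / 2.
Proof.
rewrite /level_mass big_mkcond /=.
rewrite (reindex (fun p : bool * k.-tuple bool => [tuple of p.1 :: p.2])) /=; last first.
  exists (fun u : k.+1.-tuple bool => (thead u, [tuple of behead u])).
    by move=> [x t] _ /=; rewrite theadE; congr pair; apply: val_inj.
  by move=> u _; rewrite [in RHS](tuple_eta u).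
rewrite -(pair_bigA _ (fun x (t : k.-tuple bool) => if P (x :: t) then 2 ^- k.+1 else 0)) /=.
rewrite big_bool /= mulrDl !mulr_suml addrC.
by congr (_ + _); rewrite [RHS]big_mkcond; apply: eq_bigr => u _; case: ifP;
  rewrite ?mul0r // exprS invfM mulrC.
Qed.

Lemma level_mass_partition (T : finType) (Y : seq bool -> option T) k :
  level_mass R (fun u => Y u != None) k = \sum_(x : T) level_mass R (fun u => Y u == Some x) k.
Proof.
under [RHS]eq_bigr do rewrite /level_mass big_mkcond /=.
rewrite exchange_big /level_mass big_mkcond /=; apply: eq_bigr => u _.
case: (Y u) => [y|] /=; last by rewrite big1.
rewrite (bigD1 y) //= eqxx big1 ?addr0 // => x xy.
by case: eqP => // -[yx]; rewrite yx eqxx in xy.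
Qed.
End LevelMass.

Section OptUnfold.
Variables (R : realType) (n : nat) (phi : {perm n.-tuple bool}) (F : n.-tuple bool -> R).

Definition opt_f2 (b : seq bool) : R :=
  F (phi (to_tuple n (b ++ false :: nseq (n - size b - 1) true))).

(* Verbatim the anonymous loop of [opt_desc], named so that it can be rewritten. *)
Definition opt_loop (k : nat) (b : seq bool) (f0 f1 f2 : R) (l : nat) (bits : seq bool) :
    option (n.-tuple bool * seq bool) :=
  (fix loop (l : nat) (bits : seq bool) {struct bits} :=
   match bits with
   | [::] => None
   | x :: bits' =>
     if ~~ x && bdigit (f2 - f0) l.+1 then opt_desc phi F k (rcons b false) l.+1 f0 f2 bits' else
     if x && bdigit (f1 - f2) l.+1 then opt_desc phi F k (rcons b true) l.+1 f2 f1 bits' else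
     loop l.+1 bits'
   end) l bits.

Lemma opt_loop_cons k b f0 f1 f2 l x bits : opt_loop k b f0 f1 f2 l (x :: bits) =
  if ~~ x && bdigit (f2 - f0) l.+1 then opt_desc phi F k (rcons b false) l.+1 f0 f2 bits else
  if x && bdigit (f1 - f2) l.+1 then opt_desc phi F k (rcons b true) l.+1 f2 f1 bits else
  opt_loop k b f0 f1 f2 l.+1 bits.
Proof. by []. Qed.

Lemma opt_desc0 b l f0 f1 bits :
  opt_desc phi F 0 b l f0 f1 bits = Some (phi (to_tuple n b), bits).
Proof. by []. Qed.

Lemma opt_descS k b l f0 f1 bits : opt_desc phi F k.+1 b l f0 f1 bits =
  let f2 := opt_f2 b in
  if f2 == f1 then opt_desc phi F k (rcons b false) l f0 f2 bits else
  if f2 == f0 then opt_desc phi F k (rcons b true) l f2 f1 bits else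
  if (0 < l)%N && bdigit (f2 - f0) l && ~~ bdigit (f1 - f2) l
    then opt_desc phi F k (rcons b false) l f0 f2 bits else
  if (0 < l)%N && ~~ bdigit (f2 - f0) l && bdigit (f1 - f2) l
    then opt_desc phi F k (rcons b true) l f2 f1 bits else
  opt_loop k b f0 f1 f2 l bits.
Proof. by []. Qed.

Lemma opt_desc_output k b l f0 f1 bits y rest :
  opt_desc phi F k b l f0 f1 bits = Some (y, rest) ->
  exists2 c, size c = k & y = phi (to_tuple n (b ++ c)).
Proof.
elim: k b l f0 f1 bits => [|k IH] b l f0 f1 bits.
  by rewrite opt_desc0 => -[<- _]; exists [::]; rewrite ?cats0.
have child x l' g0 g1 bits' : opt_desc phi F k (rcons b x) l' g0 g1 bits' = Some (y, rest) ->
    exists2 c, size c = k.+1 & y = phi (to_tuple n (b ++ c)).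
  by move/IH => [c sc ->]; exists (x :: c); rewrite /= ?sc ?cat_rcons.
rewrite opt_descS /=.
do 4 (case: ifP => _; first exact: child).
elim: bits l => [|x bits IHbits] l //; rewrite opt_loop_cons.
by do 2 (case: ifP => _; first exact: child); exact: IHbits.
Qed.

Lemma opt_desc_cat k b l f0 f1 bits w y rest :
  opt_desc phi F k b l f0 f1 bits = Some (y, rest) ->
  opt_desc phi F k b l f0 f1 (bits ++ w) = Some (y, rest ++ w).
Proof.
elim: k b l f0 f1 bits => [|k IH] b l f0 f1 bits; first by rewrite !opt_desc0 => -[<- <-].
rewrite !opt_descS /=.
do 4 (case: ifP => _; first exact: IH).
elim: bits l => [|x bits IHbits] l //; rewrite cat_cons !opt_loop_cons.
by do 2 (case: ifP => _; first exact: IH); exact: IHbits.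
Qed.

Lemma opt_gen_prefix_free : prefix_free (opt_gen phi F).
Proof.
move=> u v; rewrite /opt_gen /opt_exec.
case halt_u: opt_desc => [[x [|? ?]]|] //= _ + /prefixP[w vE].
by rewrite vE (opt_desc_cat w halt_u); case: w {vE} => [|? ?]; rewrite ?cats0.
Qed.

End OptUnfold.

Lemma carry_step (R : realType) (k0 k1 : int) (bu bv bw : bool) (t hl hr lh : R) :
  0 <= k0 <= 1 -> 0 <= k1 <= 1 -> k1%:~R = 2 * k0%:~R + bw%:R - bu%:R - bv%:R :> R ->
  k0%:~R * (2 * t) * (((if bu then hl else lh) + (if bv then hr else lh)) / 2)
    + bw%:R * t * (if bu && ~~ bv then hl else if ~~ bu && bv then hr else lh)
  = bu%:R * t * hl + bv%:R * t * hr + k1%:~R * t * lh.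
Proof.
move=> k0_01 k1_01.
have [->|->] : k0 = 0 \/ k0 = 1 by lia.
all: have [->|->] : k1 = 0 \/ k1 = 1 by lia.
all: by case: bu bv bw => [] [] []; rewrite /= ?mulr1z ?mulr0z ?mulr1n ?mulr0n; lra.
Qed.

Section CarrySum.
Variables (R : realType) (u v : R) (hl hr lh : nat -> nat -> R).
Hypotheses (u_gt0 : 0 < u) (v_gt0 : 0 < v) (uv_le1 : u + v <= 1).
Hypothesis lh0 : forall l, lh l 0 = 0.
Hypothesis lhS : forall l i, lh l i.+1 =
  ((if bdigit u l.+1 then hl l.+1 i else lh l.+1 i)
   + (if bdigit v l.+1 then hr l.+1 i else lh l.+1 i)) / 2.

Definition carry_choice l i :=
  if (0 < l)%N && bdigit u l && ~~ bdigit v l then hl l i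
  else if (0 < l)%N && ~~ bdigit u l && bdigit v l then hr l i
  else lh l i.

Local Definition carry m := binfloor (u + v) m - binfloor u m - binfloor v m.

Local Definition digit_terms J j :=
  bitr u j * 2 ^- j * hl j (J - j) + bitr v j * 2 ^- j * hr j (J - j).

(* [carry m] lies in {0, 1} and is the weight with which the loop, having read
   m digits, is still running. *)
Lemma carry_sum_partial J m : (m <= J)%N ->
  \sum_(0 <= l < J.+1) bitr (u + v) l * 2 ^- l * carry_choice l (J - l) =
  \sum_(0 <= j < m.+1) digit_terms J j + (carry m)%:~R * 2 ^- m * lh m (J - m)
  + \sum_(m.+1 <= l < J.+1) bitr (u + v) l * 2 ^- l * carry_choice l (J - l).
Proof.
have [u01 v01 w01] : [/\ 0 <= u <= 1, 0 <= v <= 1 & 0 <= u + v <= 1].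
  by move: u_gt0 v_gt0 uv_le1; split; apply/andP; split; lra.
elim: m => [_|m IH lt_mJ].
  have [u_lt1 v_lt1] : u < 1 /\ v < 1 by move: u_gt0 v_gt0 uv_le1; split; lra.
  rewrite big_ltn // !big_nat1 /carry_choice /= /digit_terms /carry /bitr !binfloor_unit //.
  rewrite !bdigit_unit // (lt_eqF u_lt1) (lt_eqF v_lt1) !subn0.
  by case: (u + v == 1); rewrite /= ?mul0r ?addr0 ?add0r ?mulr1n.
rewrite IH 1?ltnW // (big_ltn (lt_mJ : (m.+1 < J.+1)%N)) [in RHS]big_nat_recr //= -!addrA.
congr (_ + _); rewrite !addrA; congr (_ + _).
have -> : (J - m)%N = (J - m.+1).+1 by lia.
have -> : 2 ^- m = 2 * 2 ^- m.+1 :> R by rewrite exprS invfM mulrA divff ?mul1r.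
rewrite lhS /digit_terms /carry_choice /bitr /=; apply: carry_step; rewrite ?binfloorD_carry //.
by rewrite /carry !binfloorS; ring.
Qed.

Lemma carry_sum J :
  \sum_(0 <= l < J.+1) bitr (u + v) l * 2 ^- l * carry_choice l (J - l) =
  \sum_(0 <= l < J.+1) bitr u l * 2 ^- l * hl l (J - l)
  + \sum_(0 <= l < J.+1) bitr v l * 2 ^- l * hr l (J - l).
Proof.
rewrite (carry_sum_partial (leqnn J)) subnn lh0 mulr0 addr0 [X in _ + X]big_geq // addr0.
by rewrite -big_split.
Qed.
End CarrySum.

Section DyadicSeries.
Variable R : realType.
Local Open Scope ereal_scope.

Lemma nneseries_le_ub (u : nat -> \bar R) (x : \bar R) : (forall k, 0 <= u k) ->
  (forall K, \sum_(0 <= i < K) u i <= x) -> \sum_(i <oo) u i <= x.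
Proof.
move=> u_ge0 ub.
have /ereal_nondecreasing_cvgn/cvg_lim lim_sup :=
  @ereal_nondecreasing_series R u xpredT 0%N (fun k _ _ => u_ge0 k).
rewrite (_ : \sum_(i <oo) u i = limn (fun K => \sum_(0 <= i < K | xpredT i) u i)) //.
by rewrite lim_sup //; apply: ge_ereal_sup => _ [K _ <-]; exact: ub.
Qed.

Lemma eseries_fin (a : nat -> R) M :
  (forall J, (0 <= a J)%R) -> (forall J, (M <= J)%N -> a J = 0%R) ->
  \sum_(J <oo) (a J)%:E = (\sum_(0 <= J < M) a J)%:E.
Proof.
move=> a_ge0 a_eq0.
rewrite (@nneseries_split R (fun J => (a J)%:E) 0 M) ?add0n; last by move=> k _; rewrite lee_fin.
by rewrite eseries0 ?adde0 ?sumEFin // => J MJ _; rewrite a_eq0.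
Qed.

Lemma eseries_bitr N (z : R) : (0 <= z <= 1)%R -> dyadic N z ->
  \sum_(J <oo) (bitr z J * 2 ^- J)%:E = z%:E.
Proof.
move=> z01 dz; rewrite (@eseries_fin _ N.+1).
- by rewrite big_mkord sum_bitr // (binfloor_dyadic dz (leqnn N)) mulfK // expf_neq0.
- by move=> J; rewrite mulr_ge0 ?invr_ge0 ?exprn_ge0.
- by move=> J NJ; rewrite (bitr_dyadic dz NJ) mul0r.
Qed.

End DyadicSeries.

Lemma dict_lt_cat (b s t : seq bool) : dict_lt (b ++ s) (b ++ t) = dict_lt s t.
Proof. by elim: b => //= x b ->; rewrite eqxx andNb. Qed.

Lemma dict_lt_irr (s : seq bool) : dict_lt s s = false.
Proof. by elim: s => //= x s ->; rewrite andNb andbF. Qed.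

Lemma dict_lt_rcons (s t : seq bool) x y : size s = size t ->
  dict_lt (rcons s x) (rcons t y) = dict_lt s t || (s == t) && ~~ x && y.
Proof.
elim: s t => [|a s IH] [|c t] //= => [_|[st]]; first by rewrite andbF orbF.
by rewrite IH // eqseq_cons; case: a; case: c => /=; rewrite ?orbF ?andbA.
Qed.

Lemma dict_le_ones (s : seq bool) : (s == nseq (size s) true) || dict_lt s (nseq (size s) true).
Proof. by elim: s => [|[] s IH] //=. Qed.

Lemma take_rcons_split (b s : seq bool) : (size b < size s)%N ->
  (take (size b) s == b)
  = (take (size b).+1 s == rcons b false) || (take (size b).+1 s == rcons b true).
Proof.
move=> lt_bs; rewrite (take_nth false lt_bs) !eqseq_rcons.
by case: nth; rewrite /= ?andbT ?andbF ?orbF.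
Qed.

Lemma big_or_disjoint (R : realType) (T : finType) (P0 P1 Q : pred T) (f : T -> R) :
  (forall y, P0 y -> ~~ P1 y) ->
  \sum_(y | (P0 y || P1 y) && Q y) f y = \sum_(y | P0 y && Q y) f y + \sum_(y | P1 y && Q y) f y.
Proof.
move=> disj; rewrite (bigID P0) /=; congr (_ + _); apply: eq_bigl => y.
  by case: (P0 y); rewrite /= ?andbT ?andbF.
by case P0y: (P0 y); rewrite /= ?andbT ?andbF // (negPf (disj y P0y)).
Qed.

Section OptCorrect.
Variables (R : realType) (n : nat) (phi : {perm n.-tuple bool}) (F : n.-tuple bool -> R).
Variable N : nat.
Hypothesis F01 : forall b, 0 <= F b <= 1.
Hypothesis F_mono : forall b b', fmt_lt phi b b' -> F b <= F b'.
Hypothesis F_top : F (phi [tuple of nseq n true]) = 1.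
Hypothesis F_dyadic : forall b, dyadic N (F b).

Local Notation leaf b := (phi (to_tuple n b)).
Local Notation code y := (val ((phi^-1)%g y)).
Local Notation f2 := (opt_f2 phi F).

Lemma to_tupleK (s : seq bool) : size s = n -> val (to_tuple n s) = s.
Proof. by move=> sz; rewrite /to_tuple insubdK //; apply/eqP. Qed.

Lemma leafK (x : n.-tuple bool) : leaf (code x) = x.
Proof.
have -> : to_tuple n (code x) = (phi^-1)%g x.
  by apply: val_inj; rewrite to_tupleK // size_tuple.
by rewrite permKV.
Qed.

Lemma F_mono_seq (s t : seq bool) : size s = n -> size t = n -> dict_lt s t ->
  F (leaf s) <= F (leaf t).
Proof. by move=> ss st lt_st; apply: F_mono; rewrite /fmt_lt !permK !to_tupleK. Qed.

Lemma leaf_neq (b c c' : seq bool) (x y : bool) :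
  size (b ++ x :: c) = n -> size (b ++ y :: c') = n -> x != y ->
  leaf (b ++ x :: c) != leaf (b ++ y :: c').
Proof.
move=> sx sy xy; apply/negP => /eqP /perm_inj /(congr1 val).
rewrite !to_tupleK // => /(congr1 (drop (size b))).
by rewrite !drop_size_cat // => -[xy']; rewrite xy' eqxx in xy.
Qed.

(* The states (remaining depth, prefix, f0, f1) of the descent; the counter l is
   not part of them, as the bounds f0 and f1 do not depend on it. *)
Inductive reachable : nat -> seq bool -> R -> R -> Prop :=
| reachable_root : reachable n [::] 0 1
| reachable_left k b f0 f1 : reachable k.+1 b f0 f1 -> reachable k (rcons b false) f0 (f2 b)
| reachable_right k b f0 f1 : reachable k.+1 b f0 f1 -> reachable k (rcons b true) (f2 b) f1.

Lemma reachable_inv k b f0 f1 : reachable k b f0 f1 ->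
  [/\ (size b + k)%N = n, f1 = F (leaf (b ++ nseq k true)),
      forall c, size c = k -> f0 <= F (leaf (b ++ c)), 0 <= f0
    & dyadic N f0 /\ dyadic N f1].
Proof.
elim=> {k b f0 f1} [|k b f0 f1 _ [sb f1E f0_le f0_ge0 [d0 d1]]
                   |k b f0 f1 _ [sb f1E f0_le f0_ge0 [d0 d1]]].
- split => //; last by split; [exact: dyadic0 | exact: dyadic1].
    by rewrite -F_top; congr (F (phi _)); apply: val_inj; rewrite to_tupleK // size_nseq.
  by move=> c _; have /andP[] := F01 (leaf c).
- have k_eq : (n - size b - 1)%N = k by lia.
  split; [by rewrite size_rcons; lia | by rewrite /opt_f2 k_eq cat_rcons | | by [] |].
    by move=> c sc; rewrite cat_rcons; apply: f0_le; rewrite /= sc.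
  by split => //; exact: F_dyadic.
- have k_eq : (n - size b - 1)%N = k by lia.
  split; [by rewrite size_rcons; lia | by rewrite f1E cat_rcons | | |].
  + move=> c sc; rewrite cat_rcons /opt_f2 k_eq; apply: F_mono_seq; rewrite ?dict_lt_cat //.
      by rewrite size_cat /= size_nseq; lia.
    by rewrite size_cat /= sc; lia.
  + by have /andP[] := F01 (leaf (b ++ false :: nseq (n - size b - 1) true)).
  + by split => //; exact: F_dyadic.
Qed.

Lemma reachable_bounds k b f0 f1 : reachable k b f0 f1 -> 0 <= f0 <= f1 /\ f1 <= 1.
Proof.
move/reachable_inv => [_ f1E f0_le f0_ge0 _]; rewrite f0_ge0 f1E f0_le ?size_nseq //.
by have /andP[] := F01 (leaf (b ++ nseq k true)).
Qed.

Lemma reachable_f2 k b f0 f1 : reachable k.+1 b f0 f1 -> f0 <= f2 b <= f1.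
Proof.
move/reachable_inv => [sb f1E f0_le _ _]; have k_eq : (n - size b - 1)%N = k by lia.
rewrite /opt_f2 k_eq f0_le /= ?size_nseq // f1E F_mono_seq ?dict_lt_cat //.
  by rewrite size_cat /= size_nseq; lia.
by rewrite size_cat /= size_nseq; lia.
Qed.

Lemma reachable_extend k b f0 f1 c : reachable k b f0 f1 -> size c = k ->
  exists f0' f1', reachable 0 (b ++ c) f0' f1'.
Proof.
elim: c k b f0 f1 => [|x c IH] [|k] b f0 f1 //= reach_b.
  by exists f0, f1; rewrite cats0.
case=> sc; rewrite -cat_rcons; case: x.
  exact: IH (reachable_right reach_b) sc.
exact: IH (reachable_left reach_b) sc.
Qed.

Lemma reachable_code x : exists f0 f1, reachable 0 (code x) f0 f1.
Proof. exact: reachable_extend reachable_root (size_tuple _). Qed.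

Definition halt_mass k b l f0 f1 x J :=
  level_mass R (fun u => opt_desc phi F k b l f0 f1 u == Some (x, [::])) J.

Definition loop_halt_mass k b f0 f1 l x J :=
  level_mass R (fun u => opt_loop phi F k b f0 f1 (f2 b) l u == Some (x, [::])) J.

Lemma halt_mass0 b l f0 f1 x J :
  halt_mass 0 b l f0 f1 x J = ((x == leaf b) && (J == 0%N))%:R.
Proof.
case: J => [|J]; rewrite /halt_mass.
  rewrite level_mass0 opt_desc0 andbT; case: eqP => [[->]|neq]; first by rewrite eqxx.
  by case: eqP => // xE; rewrite xE in neq.
rewrite andbF mulr0n -(level_mass_pred0 R J.+1); apply: eq_level_mass => u /eqP su.
by rewrite opt_desc0; apply/eqP => -[_ u0]; rewrite u0 in su.
Qed.

Lemma halt_mass_outside k b l f0 f1 x J :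
  (forall c, size c = k -> x != leaf (b ++ c)) -> halt_mass k b l f0 f1 x J = 0.
Proof.
move=> x_out; rewrite -(level_mass_pred0 R J); apply: eq_level_mass => u _ /=.
by apply/eqP => /opt_desc_output [c /x_out x_neq x_eq]; rewrite x_eq eqxx in x_neq.
Qed.

Lemma halt_mass_f2_top k b l f0 f1 x J : f2 b = f1 ->
  halt_mass k.+1 b l f0 f1 x J = halt_mass k (rcons b false) l f0 (f2 b) x J.
Proof. by move=> f2E; apply: eq_level_mass => u _; rewrite opt_descS /= f2E eqxx. Qed.

Lemma halt_mass_f2_bot k b l f0 f1 x J : f2 b != f1 -> f2 b = f0 ->
  halt_mass k.+1 b l f0 f1 x J = halt_mass k (rcons b true) l (f2 b) f1 x J.
Proof.
by move=> f2_neq f2E; apply: eq_level_mass => u _; rewrite opt_descS /= (negPf f2_neq) f2E eqxx.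
Qed.

Lemma halt_mass_inner k b l f0 f1 x J : f2 b != f1 -> f2 b != f0 ->
  halt_mass k.+1 b l f0 f1 x J =
  carry_choice (f2 b - f0) (f1 - f2 b)
    (fun l J => halt_mass k (rcons b false) l f0 (f2 b) x J)
    (fun l J => halt_mass k (rcons b true) l (f2 b) f1 x J)
    (fun l J => loop_halt_mass k b f0 f1 l x J) l J.
Proof.
move=> f2_neq1 f2_neq0; rewrite /carry_choice.
by case: ifP => [c1|c1]; [|case: ifP => c2]; apply: eq_level_mass => u _;
  rewrite opt_descS /= (negPf f2_neq1) (negPf f2_neq0) ?c1 ?c2.
Qed.

Lemma loop_halt_mass0 k b f0 f1 l x : loop_halt_mass k b f0 f1 l x 0 = 0.
Proof. by rewrite /loop_halt_mass level_mass0. Qed.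

Lemma loop_halt_massS k b f0 f1 l x J : loop_halt_mass k b f0 f1 l x J.+1 =
  ((if bdigit (f2 b - f0) l.+1 then halt_mass k (rcons b false) l.+1 f0 (f2 b) x J
    else loop_halt_mass k b f0 f1 l.+1 x J)
   + (if bdigit (f1 - f2 b) l.+1 then halt_mass k (rcons b true) l.+1 (f2 b) f1 x J
      else loop_halt_mass k b f0 f1 l.+1 x J)) / 2.
Proof.
rewrite /loop_halt_mass level_massS.
by congr ((_ + _) / 2); case: ifP => h; apply: eq_level_mass => u _; rewrite opt_loop_cons /= h.
Qed.

Lemma halt_mass_step k b f0 f1 x J : reachable k.+1 b f0 f1 ->
  \sum_(0 <= l < J.+1) bitr (f1 - f0) l * 2 ^- l * halt_mass k.+1 b l f0 f1 x (J - l) =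
  \sum_(0 <= l < J.+1)
     bitr (f2 b - f0) l * 2 ^- l * halt_mass k (rcons b false) l f0 (f2 b) x (J - l)
  + \sum_(0 <= l < J.+1)
     bitr (f1 - f2 b) l * 2 ^- l * halt_mass k (rcons b true) l (f2 b) f1 x (J - l).
Proof.
move=> reach_b; have /andP[f0_le f2_le] := reachable_f2 reach_b.
have [/andP[f0_ge0 _] f1_le1] := reachable_bounds reach_b.
have [f2_top|f2_neq1] := eqVneq (f2 b) f1.
  under eq_bigr do rewrite halt_mass_f2_top //.
  by rewrite -f2_top subrr [X in _ = _ + X]big1 ?addr0 // => l _; rewrite bitr0 !mul0r.
have [f2_bot|f2_neq0] := eqVneq (f2 b) f0.
  under eq_bigr do rewrite halt_mass_f2_bot //.
  by rewrite -f2_bot subrr [X in _ = X + _]big1 ?add0r // => l _; rewrite bitr0 !mul0r.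
under eq_bigr do rewrite halt_mass_inner //.
have -> : f1 - f0 = (f2 b - f0) + (f1 - f2 b) by ring.
apply: carry_sum => [|||l|l J'].
- by rewrite subr_gt0 lt_neqAle eq_sym f2_neq0 f0_le.
- by rewrite subr_gt0 lt_neqAle f2_neq1 f2_le.
- by move: f0_ge0 f1_le1; lra.
- exact: loop_halt_mass0.
- exact: loop_halt_massS.
Qed.

Lemma halt_mass_sibling k b f0 f1 g0 g1 (x y : bool) c l J :
  reachable k.+1 b f0 f1 -> size c = k -> x != y ->
  halt_mass k (rcons b y) l g0 g1 (leaf (b ++ x :: c)) J = 0.
Proof.
move=> reach_b sc xy; have [sb _ _ _ _] := reachable_inv reach_b.
apply: halt_mass_outside => c' sc'; rewrite cat_rcons leaf_neq //.
  by rewrite size_cat /= sc; lia.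
by rewrite size_cat /= sc'; lia.
Qed.

Local Notation root_mass x J := (halt_mass n [::] 0 0 1 x J).

Lemma halt_mass_root k b f0 f1 c J : reachable k b f0 f1 -> size c = k ->
  root_mass (leaf (b ++ c)) J =
  \sum_(0 <= l < J.+1)
     bitr (f1 - f0) l * 2 ^- l * halt_mass k b l f0 f1 (leaf (b ++ c)) (J - l).
Proof.
move=> reach_b; elim: reach_b c => {k b f0 f1}
  [|k b f0 f1 reach_b IH|k b f0 f1 reach_b IH] c sc.
- rewrite subr0 big_ltn // big_nat_cond big1 ?addr0 => [|l /andP[/andP[l_gt0 _] _]].
    by rewrite /bitr bdigit_unit ?lexx ?ler01 // subn0 expr0 invr1 eqxx !mul1r.
  by rewrite (bitr_dyadic (dyadic1 R 0) l_gt0) !mul0r.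
- rewrite cat_rcons IH /= ?sc // halt_mass_step // [X in _ + X = _]big1 ?addr0 // => l _.
  by rewrite (halt_mass_sibling _ _ _ _ reach_b sc) ?mulr0.
- rewrite cat_rcons IH /= ?sc // halt_mass_step // [X in X + _ = _]big1 ?add0r // => l _.
  by rewrite (halt_mass_sibling _ _ _ _ reach_b sc) ?mulr0.
Qed.

Local Notation Y := (opt_gen phi F).

Lemma level_mass_opt_gen x J : level_mass R (fun u => Y u == Some x) J = root_mass x J.
Proof.
apply: eq_level_mass => u _; rewrite /opt_gen /opt_exec.
case: opt_desc => [[y [|? ?]]|] //=; first by apply/eqP/eqP => [[->]|[->]].
by apply/esym/eqP.
Qed.

Lemma root_mass_leaf b f0 f1 J : reachable 0 b f0 f1 ->
  root_mass (leaf b) J = bitr (f1 - f0) J * 2 ^- J.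
Proof.
move=> reach_b; rewrite -[b]cats0 (halt_mass_root _ reach_b) // big_nat_recr //=.
rewrite halt_mass0 cats0 eqxx subnn /= mulr1 big_nat_cond big1 ?add0r //.
move=> l /andP[/andP[_ lJ] _].
by rewrite halt_mass0 subn_eq0 leqNgt lJ andbF mulr0n mulr0.
Qed.

Lemma gen_prob_leaf b f0 f1 : reachable 0 b f0 f1 -> gen_prob R Y (leaf b) = (f1 - f0)%:E.
Proof.
move=> reach_b; have [_ _ _ _ [d0 d1]] := reachable_inv reach_b.
have [/andP[f0_ge0 f0_le] f1_le1] := reachable_bounds reach_b.
rewrite /gen_prob /str_mass.
under eq_eseriesr do rewrite level_mass_opt_gen (root_mass_leaf _ reach_b).
by apply: eseries_bitr (dyadicB d1 d0); apply/andP; split; move: f0_ge0 f0_le f1_le1; lra.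
Qed.

Definition opt_prob x : R := fine (gen_prob R Y x).

Lemma opt_prob_leaf b f0 f1 : reachable 0 b f0 f1 -> opt_prob (leaf b) = f1 - f0.
Proof. by move=> reach_b; rewrite /opt_prob (gen_prob_leaf reach_b). Qed.

Lemma gen_prob_opt x : gen_prob R Y x = (opt_prob x)%:E.
Proof.
have [f0 [f1 reach_x]] := reachable_code x.
by rewrite -(leafK x) /opt_prob (gen_prob_leaf reach_x).
Qed.

Lemma opt_prob_unit_dyadic x : 0 <= opt_prob x <= 1 /\ dyadic N (opt_prob x).
Proof.
have [f0 [f1 reach_x]] := reachable_code x; have [_ _ _ _ [d0 d1]] := reachable_inv reach_x.
have [/andP[f0_ge0 f0_le] f1_le1] := reachable_bounds reach_x.
rewrite -(leafK x) (opt_prob_leaf reach_x); split; last exact: dyadicB.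
by apply/andP; split; move: f0_ge0 f0_le f1_le1; lra.
Qed.

Lemma root_mass_bitr x J : root_mass x J = bitr (opt_prob x) J * 2 ^- J.
Proof.
have [f0 [f1 reach_x]] := reachable_code x.
by rewrite -(leafK x) (opt_prob_leaf reach_x) (root_mass_leaf _ reach_x).
Qed.

Lemma cdf_leaf b f0 f1 x : reachable 0 b f0 f1 ->
  \sum_(y | (code y == b) && fmt_le phi y x) opt_prob y =
  if code x == b then F x - f0 else if dict_lt b (code x) then f1 - f0 else 0.
Proof.
move=> reach_b; have [sb f1E _ _ _] := reachable_inv reach_b; rewrite addn0 in sb.
have code_leaf : code (leaf b) = b by rewrite permK to_tupleK.
have codeK y : code y = b -> y = leaf b by move=> <-; rewrite leafK.
rewrite (eq_bigl (fun y => (y == leaf b) && fmt_le phi (leaf b) x)); last first.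
  move=> y; apply/andP/andP => -[/eqP yb le_yx].
    by rewrite -(codeK y yb); split.
  by rewrite yb code_leaf; split.
rewrite big_mkcondr big_pred1_eq (opt_prob_leaf reach_b) /fmt_le /fmt_lt code_leaf.
have [/codeK ->|x_neq] := eqVneq (code x) b; first by rewrite eqxx f1E cats0.
have -> : (leaf b == x) = false by apply/negP => /eqP xE; rewrite -xE code_leaf eqxx in x_neq.
by case: ifP.
Qed.

Lemma cdf_subtree k b f0 f1 x : reachable k b f0 f1 ->
  \sum_(y | (take (size b) (code y) == b) && fmt_le phi y x) opt_prob y =
  if take (size b) (code x) == b then F x - f0
  else if dict_lt b (take (size b) (code x)) then f1 - f0 else 0.
Proof.
elim: k b f0 f1 => [|k IH] b f0 f1 reach_b; have [sb _ _ _ _] := reachable_inv reach_b.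
  rewrite addn0 in sb; under eq_bigl do rewrite take_oversize ?size_tuple ?sb //.
  by rewrite take_oversize ?size_tuple ?sb //; exact: cdf_leaf.
have IH0 := IH _ _ _ (reachable_left reach_b); have IH1 := IH _ _ _ (reachable_right reach_b).
rewrite !size_rcons in IH0 IH1.
have lt_b : (size b < n)%N by lia.
under eq_bigl => y do rewrite take_rcons_split ?size_tuple //.
rewrite big_or_disjoint => [|y /eqP ->]; last by rewrite eqseq_rcons eqxx.
rewrite IH0 IH1 (take_nth false (_ : size b < size (code x))%N) ?size_tuple //.
rewrite !eqseq_rcons; set t := take _ _; set c := nth _ _ _.
have st : size t = size b by rewrite size_takel // size_tuple ltnW.
rewrite !dict_lt_rcons //; have [->|tb] := eqVneq t b.
  by rewrite dict_lt_irr /=; case: c => /=; ring.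
by rewrite /= ?andbF ?orbF; case: ifP => _; ring.
Qed.

Lemma cdf_opt x : \sum_(y | fmt_le phi y x) opt_prob y = F x.
Proof.
have := cdf_subtree x reachable_root; rewrite /= take0 eqxx subr0 => <-.
by apply: eq_bigl => y; rewrite take0.
Qed.

Lemma sum_opt_prob : \sum_y opt_prob y = 1.
Proof.
rewrite -F_top -cdf_opt; apply: eq_bigl => y; apply/esym.
have : (code y == nseq n true) || dict_lt (code y) (nseq n true).
  by have := dict_le_ones (code y); rewrite size_tuple.
rewrite /fmt_le /fmt_lt permK; case/orP => [/eqP code_top|->]; last by rewrite orbT.
apply/orP; left; apply/eqP; rewrite -[y](permKV phi); congr (phi _); apply: val_inj.
by rewrite code_top.
Qed.

End OptCorrect.

Lemma abel_sum (R : realType) (s : nat -> R) M :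
  \sum_(0 <= J < M.+1) J%:R * s J =
  M%:R * \sum_(0 <= J < M.+1) s J - \sum_(0 <= k < M) \sum_(0 <= J < k.+1) s J.
Proof.
elim: M => [|M IH]; first by rewrite big_nat1 [X in _ - X]big_geq //; ring.
rewrite big_nat_recr //= IH [X in _ = _ * X - _]big_nat_recr //= [X in _ = _ - X]big_nat_recr //=.
by rewrite -addn1 natrD; ring.
Qed.

Section KnuthYao.
Variables (R : realType) (N : nat) (p : R) (a : nat -> R).
Hypothesis p01 : 0 <= p <= 1.
Hypothesis p_dyadic : dyadic N p.
Hypothesis a_dyadic : forall J, exists c : nat, a J = c%:R / 2 ^+ J.
Hypothesis a_sum : (\sum_(J <oo) (a J)%:E = p%:E)%E.

Local Notation S k := (\sum_(0 <= J < k.+1) a J).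

Let a_ge0 J : 0 <= a J.
Proof. by have [c ->] := a_dyadic J; rewrite divr_ge0 ?exprn_ge0. Qed.

Lemma partial_sum_le_binfloor k : S k <= (binfloor p k)%:~R / 2 ^+ k.
Proof.
have S_nat : exists m : nat, S k * 2 ^+ k = m%:R.
  elim: k => [|k [m mE]].
    by have [c cE] := a_dyadic 0; exists c; rewrite big_nat1 cE divr1 mulr1.
  have [c cE] := a_dyadic k.+1; exists (2 * m + c)%N.
  rewrite big_nat_recr //= mulrDl cE divfK ?expf_neq0 // natrD natrM -mE exprS; ring.
have S_le : S k <= p.
  rewrite -lee_fin -a_sum -sumEFin; apply: nneseries_lim_ge => J _ _; exact: a_ge0.
have [m mE] := S_nat; rewrite ler_pdivlMr ?exprn_gt0 // mE.
rewrite -[m%:R]/((m%:Z)%:~R) ler_int /binfloor floor_ge_int.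
by change (m%:R <= p * 2 ^+ k); rewrite -mE ler_pM2r ?exprn_gt0.
Qed.

Local Notation D := (\sum_(0 <= k < N) (binfloor p k)%:~R / 2 ^+ k).

Lemma weighted_sum_bitr :
  \sum_(0 <= J < N.+1) J%:R * (bitr p J * 2 ^- J) = N%:R * p - D.
Proof.
rewrite abel_sum big_mkord sum_bitr // (binfloor_dyadic p_dyadic (leqnn N)) mulfK ?expf_neq0 //.
by congr (_ - _); apply: eq_bigr => k _; rewrite big_mkord sum_bitr.
Qed.

Lemma weighted_partial_sum_ge M : (N <= M)%N ->
  N%:R * S M - D <= \sum_(0 <= J < M.+1) J%:R * a J.
Proof.
move=> NM; rewrite abel_sum [X in _ <= _ - X](big_cat_nat (n := N)) //=.
have S_mono k : (k <= M)%N -> S k <= S M.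
  move=> kM; rewrite [leRHS](big_cat_nat (n := k.+1)) //= ?ltnS // lerDl.
  by apply: sumr_ge0 => J _; exact: a_ge0.
have head_le : \sum_(0 <= k < N) S k <= D.
  by apply: ler_sum => k _; exact: partial_sum_le_binfloor.
have tail_le : \sum_(N <= k < M) S k <= (M - N)%:R * S M.
  rewrite mulr_natl -sumr_const_nat big_nat_cond [leRHS]big_nat_cond.
  by apply: ler_sum => k /andP[/andP[_ kM] _]; apply: S_mono; exact: ltnW.
by move: head_le tail_le; rewrite natrB //; lra.
Qed.

Lemma knuth_yao_lower_bound :
  (\sum_(J <oo) (J%:R * (bitr p J * 2 ^- J))%:E <= \sum_(J <oo) (J%:R * a J)%:E)%E.
Proof.
rewrite (@eseries_fin _ _ N.+1) => [||J NJ]; last 2 first.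
- by move=> J; rewrite mulr_ge0 ?mulr_ge0 ?invr_ge0 ?exprn_ge0.
- by rewrite (bitr_dyadic p_dyadic NJ) mul0r mulr0.
rewrite weighted_sum_bitr EFinB leeBlDr //.
have -> : (N%:R * p)%:E = (\sum_(J <oo) (N%:R * a J)%:E)%E.
  rewrite EFinM -a_sum -nneseriesZl; last by move=> J _; rewrite lee_fin a_ge0.
  by apply: eq_eseriesr => J _; rewrite EFinM.
apply: nneseries_le_ub => [J|K]; first by rewrite lee_fin mulr_ge0 ?a_ge0.
rewrite sumEFin; set M := maxn K N.
apply: (@le_trans _ _ (\sum_(0 <= J < M.+1) J%:R * a J + D)%:E).
  have SK : \sum_(0 <= J < K) a J <= S M.
    rewrite [leRHS](big_cat_nat (n := K)) //= ?lerDl; last exact/leqW/leq_maxl.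
    by apply: sumr_ge0 => J _; exact: a_ge0.
  have := weighted_partial_sum_ge (leq_maxr K N).
  by rewrite lee_fin -mulr_sumr; move: (ler_wpM2l (ler0n R N) SK); lra.
rewrite EFinD leeD2r // -sumEFin; apply: nneseries_lim_ge => J _ _.
by rewrite lee_fin mulr_ge0 ?a_ge0.
Qed.

End KnuthYao.

Section GeneratorPartition.
Variables (R : realType) (n : nat) (Y : seq bool -> option (n.-tuple bool)).
Local Open Scope ereal_scope.

Lemma str_mass_partition : str_mass R (fun u => Y u != None) = \sum_x gen_prob R Y x.
Proof.
rewrite /str_mass; under eq_eseriesr do rewrite level_mass_partition -sumEFin.
by rewrite nneseries_sum // => x k _; rewrite lee_fin level_mass_ge0.
Qed.

Lemma gen_cost_partition :
  gen_cost R Y = \sum_x \sum_(k <oo) (k%:R * level_mass R (fun u => Y u == Some x) k)%:E.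
Proof.
rewrite /gen_cost; under eq_eseriesr do rewrite level_mass_partition mulr_sumr -sumEFin.
by rewrite nneseries_sum // => x k _; rewrite lee_fin mulr_ge0 ?level_mass_ge0.
Qed.

End GeneratorPartition.

Unset Implicit Arguments.

Theorem theorem5p17 (R : realType) (E m n : nat)
    (gamma : n.-tuple bool -> xreal R) (phi : {perm n.-tuple bool})
    (F : n.-tuple bool -> R) :
  is_number_format gamma phi ->
  is_fp_cdf E m phi F ->
  let Y := opt_gen phi F in
  (* halts almost surely *)
  (str_mass R (fun u => Y u != None) = 1%E) /\
  (* Opt is a random variate generator (prefix-free halting set, total mass 1) *)
  is_generator Y (gen_prob R Y) /\
  (* Pr(X <=_B x) = F(x) *)
  (forall x : n.-tuple bool,
     (\sum_(y : n.-tuple bool | fmt_le phi y x) gen_prob R Y y)%E = (F x)%:E) /\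
  (* entropy optimality *)
  (forall Y' : seq bool -> option (n.-tuple bool),
     is_generator Y' (gen_prob R Y) -> (gen_cost R Y <= gen_cost R Y')%E).
Proof.
move=> _ [F_float [F_top F_mono]] /=.
have F01 b : 0 <= F b <= 1 := (F_float b).2.
have F_dyadic b := float_repr_dyadic (F_float b).1.
have gen_probE := gen_prob_opt F01 F_mono F_top F_dyadic.
have halts : str_mass R (fun u => opt_gen phi F u != None) = 1%E.
  rewrite str_mass_partition; under eq_bigr do rewrite gen_probE.
  by rewrite sumEFin (sum_opt_prob F01 F_mono F_top F_dyadic).
split; [exact: halts | split; [by split; [exact: opt_gen_prefix_free | split] | split]].
  move=> x; under eq_bigr do rewrite gen_probE.
  by rewrite sumEFin (cdf_opt F01 F_mono F_top F_dyadic).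
move=> Y' [_ [_ Y'_prob]]; rewrite !gen_cost_partition; apply: lee_sum => x _.
under eq_eseriesr do rewrite level_mass_opt_gen (root_mass_bitr F01 F_mono F_top F_dyadic).
have [p01 p_dyadic] := opt_prob_unit_dyadic F01 F_mono F_top F_dyadic x.
apply: knuth_yao_lower_bound p01 p_dyadic _ _ => [J|]; first by rewrite level_mass_card; eexists.
by have := Y'_prob x; rewrite gen_probE.
Qed.
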